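(* Let $\beta$ be a totally positive quadratic integer with $\operatorname{Tr}\beta > \operatorname{Nm}\beta$. Then there exists a constant $c_\beta > 0$ such that $p_\beta\big((\operatorname{Tr}\beta)\beta^n\big) \leq c_\beta$ for all $n \in \mathbb{Z}_{\geq 0}$.
   Context: A quadratic integer is a root of a monic irreducible quadratic polynomial in $\mathbb{Z}[x]$; it is totally positive if both it and its conjugate $\beta'$ are positive. $\operatorname{Tr}\beta = \beta + \beta'$, $\operatorname{Nm}\beta = \beta\beta'$. For $\alpha \in \mathbb{C}$, $p_\beta(\alpha) \in \mathbb{Z}_{\geq 0}\cup\{\infty\}$ is the number of polynomials $f \in \mathbb{Z}_{\geq 0}[x]$ (non-negative integer coefficients) with $f(\beta) = \alpha$. *)

From HB Require Import structures.
From mathcomp Require Import all_boot all_order all_algebra.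
Set Implicit Arguments. Unset Strict Implicit. Unset Printing Implicit Defensive.
Import Order.TTheory GRing.Theory Num.Theory.
Local Open Scope ring_scope.

Definition quad_poly (t m : int) : {poly int} := 'X^2 - t *: 'X + m%:P.

(* beta (in an ordered field R) is a quadratic integer with minimal polynomial
   X^2 - t X + m (monic, irreducible in Z[x]); then Tr beta = t, Nm beta = m
   and the conjugate of beta is t - beta. *)
Definition quad_int_with (R : realFieldType) (beta : R) (t m : int) : Prop :=
  irreducible_poly (quad_poly t m) /\ root (map_poly intr (quad_poly t m)) beta.

Definition totally_pos_with (R : realFieldType) (beta : R) (t : int) : Prop :=
  0 < beta /\ 0 < t%:~R - beta.

Definition nonneg_coef (f : {poly int}) : Prop := forall i : nat, 0 <= f`_i.

(* The set counted by p_beta(alpha). *)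
Definition pbeta_sols (R : realFieldType) (beta alpha : R) (f : {poly int}) : Prop :=
  nonneg_coef f /\ (map_poly intr f).[beta] = alpha.

(* p_beta(alpha) <= c  (in Z_{>=0} u {oo}): the solution set is finite,
   enumerated by a duplicate-free list of length at most c. *)
Definition pbeta_le (R : realFieldType) (beta alpha : R) (c : nat) : Prop :=
  exists s : seq {poly int},
    [/\ uniq s, (size s <= c)%N & forall f, f \in s <-> pbeta_sols beta alpha f].

From mathcomp Require Import all_boot all_order all_algebra.
From mathcomp Require Import ring lra zify.
Import Order.TTheory GRing.Theory Num.Theory.
Local Open Scope ring_scope.

(* Let beta' = t - beta be the conjugate of beta.  Irreducibility of
   X^2 - tX + m excludes the root 1, so m <= t - 2; since beta + beta' = t and
   beta beta' = m, the larger of beta, beta' is some g >= 2 and the smaller some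
   d <= 1 - 1/t.  A representation f(beta) = t beta^n with f in Z_{>=0}[x]
   transfers to f(g) = t g^n and f(d) = t d^n.  Comparing a single term f_k x^k
   with these values, the growth of g^k kills the coefficients of index
   >= n + t, the decay of d^k kills those of index <= n - t^2, and the others
   are at most t^(t^2+1).  So f lies in a box of polynomials whose size does not
   depend on n. *)

Section QuadPoly.

Context {t m : int}.

Lemma size_quad_poly : size (quad_poly t m) = 3%N.
Proof.
rewrite /quad_poly -addrA size_polyDl size_polyXn //.
apply: leq_ltn_trans (size_polyD _ _) _.
rewrite gtn_max size_polyC size_polyN (leq_ltn_trans (size_scale_leq _ _)) ?size_polyX //.
by case: (m != 0).
Qed.

Lemma quad_poly_monic : quad_poly t m \is monic.
Proof.
by rewrite monicE /lead_coef size_quad_poly /quad_poly !coefE /= mulr0 subr0 addr0.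
Qed.

Lemma horner_quad_poly (R : realFieldType) (x : R) :
  (map_poly intr (quad_poly t m)).[x] = x ^+ 2 - t%:~R * x + m%:~R.
Proof.
by rewrite /quad_poly rmorphD rmorphB /= map_polyXn map_polyZ map_polyX map_polyC !hornerE.
Qed.

(* a^2 + t a b + m b^2 = b^2 P(-a/b) for P = quad_poly t m: an irreducible
   quadratic has no rational root. *)
Lemma irreducible_quad_poly_form (a b : int) :
  irreducible_poly (quad_poly t m) -> b != 0 -> a ^+ 2 + t * a * b + m * b ^+ 2 != 0.
Proof.
move=> [_ irr] b_neq0; apply/eqP => form0.
pose q : {poly int} := b *: 'X + a%:P.
have size_q : size q = 2%N.
  by rewrite size_polyDl ?size_scale ?size_polyX ?size_polyC //; case: (a != 0).
have /irr : q %| quad_poly t m.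
  apply/Pdiv.Idomain.dvdpP; exists (b ^+ 2, b *: 'X - (t * b + a)%:P).
    by rewrite /= expf_neq0.
  apply/eqP; rewrite /= -subr_eq0 /q /quad_poly -!mul_polyC.
  have -> : (b ^+ 2)%:P * ('X^2 - t%:P * 'X + m%:P) -
      (b%:P * 'X - (t * b + a)%:P) * (b%:P * 'X + a%:P) =
      (a ^+ 2 + t * a * b + m * b ^+ 2)%:P.
    by rewrite !expr2 !polyCD !polyCM; ring.
  by rewrite form0.
by rewrite size_q => /(_ isT) /eqp_size; rewrite size_q size_quad_poly.
Qed.

Lemma irreducible_quad_poly_le_sub2 :
  irreducible_poly (quad_poly t m) -> m < t -> m <= t - 2.
Proof.
move=> irr m_lt_t; have := irreducible_quad_poly_form (-1) 1 irr (oner_neq0 _).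
by rewrite sqrrN !expr1n !mulr1 mulrN1; lia.
Qed.

End QuadPoly.

Lemma horner_size2 (R : realFieldType) (r : {poly int}) (x : R) :
  (size r <= 2)%N -> (map_poly intr r).[x] = (r`_0)%:~R + (r`_1)%:~R * x.
Proof.
move=> size_r; rewrite (@horner_coef_wide _ 2).
  by rewrite !big_ord_recr big_ord0 /= !coef_map /= expr0 expr1 mulr1 add0r.
exact: leq_trans (size_poly _ _) size_r.
Qed.

Lemma quad_roots_split {R : realFieldType} {x y s : R} :
  x + y = s -> 0 < y -> y <= x -> x * y + 2 <= s -> [/\ 2 <= x, x <= s & y * s <= s - 1].
Proof.
move=> <- y_gt0 y_le xy_le.
have y_lt1 : y < 1 by nra.
have x_ge2 : 2 <= x by nra.
by split; nra.
Qed.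

Section Conjugate.

Context {R : realFieldType} {beta : R} {t m : int}.
Hypothesis beta_quad : quad_int_with beta t m.

Lemma quad_int_linear_eq0 (a b : int) : a%:~R + b%:~R * beta = 0 -> a = 0 /\ b = 0.
Proof.
case: beta_quad => irr /eqP; rewrite horner_quad_poly => beta_root lin0.
have [b0|b_neq0] := eqVneq b 0.
  by move: lin0; rewrite b0 mul0r addr0 => /eqP; rewrite intr_eq0 => /eqP.
have /eqP[] := irreducible_quad_poly_form a b irr b_neq0.
apply: (@intr_inj R); have a_eq : a%:~R = - (b%:~R * beta) :> R by lra.
rewrite rmorph0 !rmorphD !rmorphM /= a_eq.
transitivity (b%:~R ^+ 2 * (beta ^+ 2 - t%:~R * beta + m%:~R) : R); first ring.
by rewrite beta_root mulr0.
Qed.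

Lemma horner_conj_eq0 (g : {poly int}) :
  (map_poly intr g).[beta] = 0 -> (map_poly intr g).[t%:~R - beta] = 0.
Proof.
have [irr /eqP beta_root] := beta_quad.
set r := g %% quad_poly t m.
have horner_mod x : (map_poly intr (quad_poly t m)).[x] = 0 ->
    (map_poly intr g).[x] = (map_poly intr r).[x] :> R.
  move=> x_root; rewrite {1}(Pdiv.IdomainMonic.divp_eq (@quad_poly_monic t m) g).
  by rewrite rmorphD rmorphM /= hornerD hornerM x_root mulr0 add0r.
have conj_root : (map_poly intr (quad_poly t m)).[t%:~R - beta] = 0.
  by rewrite -beta_root !horner_quad_poly; ring.
have size_r : (size r <= 2)%N.
  by rewrite -ltnS -(@size_quad_poly t m) ltn_modp -size_poly_eq0 size_quad_poly.
rewrite (horner_mod _ beta_root) (horner_mod _ conj_root) !horner_size2 //.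
by move=> /quad_int_linear_eq0[-> ->]; rewrite mul0r addr0.
Qed.

Lemma horner_conj_eq (f : {poly int}) (c : int) (n : nat) :
  (map_poly intr f).[beta] = c%:~R * beta ^+ n ->
  (map_poly intr f).[t%:~R - beta] = c%:~R * (t%:~R - beta) ^+ n.
Proof.
have horner_diff x : (map_poly intr (f - c *: 'X^n)).[x] =
    (map_poly intr f).[x] - c%:~R * x ^+ n :> R.
  by rewrite rmorphB /= map_polyZ map_polyXn !hornerE.
move=> /eqP; rewrite -subr_eq0 -horner_diff => /eqP /horner_conj_eq0.
by rewrite horner_diff => /eqP; rewrite subr_eq0 => /eqP.
Qed.

Lemma quad_int_conj_split :
  0 < beta -> 0 < t%:~R - beta -> m%:~R + 2 <= t%:~R :> R ->
  exists g d : R, [/\ 2 <= g, g <= t%:~R, 0 < d, d * t%:~R <= t%:~R - 1 &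
    forall (f : {poly int}) (c : int) (n : nat),
      (map_poly intr f).[beta] = c%:~R * beta ^+ n ->
      (map_poly intr f).[g] = c%:~R * g ^+ n /\ (map_poly intr f).[d] = c%:~R * d ^+ n].
Proof.
move=> beta_gt0 conj_gt0 m_le.
have [_ /eqP] := beta_quad; rewrite horner_quad_poly => beta_root.
have sum : beta + (t%:~R - beta) = t%:~R by ring.
have prod_le : beta * (t%:~R - beta) + 2 <= t%:~R by lra.
have [conj_le|conj_gt] := lerP (t%:~R - beta) beta.
- have [? ? ?] := quad_roots_split sum conj_gt0 conj_le prod_le.
  by exists beta, (t%:~R - beta); split=> // f c n f_beta; split=> //; apply: horner_conj_eq.
- rewrite addrC in sum; rewrite mulrC in prod_le.
  have [? ? ?] := quad_roots_split sum beta_gt0 (ltW conj_gt) prod_le.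
  by exists (t%:~R - beta), beta; split=> // f c n f_beta; split=> //; apply: horner_conj_eq.
Qed.

End Conjugate.

Lemma natr_succ_le_expr {R : realFieldType} {x : R} (j : nat) :
  2 <= x -> j.+1%:R <= x ^+ j.
Proof.
move=> x_ge2; apply: (@le_trans _ _ (2 ^+ j)); last by rewrite lerXn2r // nnegrE; lra.
by rewrite -natrX ler_nat ltn_expl.
Qed.

Lemma expr_bernoulli_le (R : realFieldType) (x a : R) (j : nat) :
  0 <= x -> 0 < a -> x * (a + 1) <= a -> x ^+ j * (a + j%:R) <= a.
Proof.
move=> x_ge0 a_gt0 xa_le; elim: j => [|j IH]; first by rewrite expr0 addr0 mul1r.
have xj_ge0 : 0 <= x ^+ j by exact: exprn_ge0.
suff : a * (x ^+ j.+1 * (a + j.+1%:R)) <= a * a by rewrite ler_pM2l.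
apply: (le_trans _ (ler_pM _ _ IH xa_le)); rewrite ?mulr_ge0 ?addr_ge0 //; try lra.
rewrite -subr_ge0 exprS -natr1.
have -> : x ^+ j * (a + j%:R) * (x * (a + 1)) - a * (x * x ^+ j * (a + (j%:R + 1))) =
    x * x ^+ j * j%:R by ring.
by rewrite !mulr_ge0.
Qed.

Lemma coef_mul_expr_le_horner {R : realFieldType} {f : {poly int}} {x : R} (k : nat) :
  nonneg_coef f -> 0 <= x -> (f`_k)%:~R * x ^+ k <= (map_poly intr f).[x].
Proof.
move=> f_ge0 x_ge0.
have term_ge0 (i : 'I_(size f)) : 0 <= (map_poly intr f)`_i * x ^+ i.
  by rewrite coef_map /= mulr_ge0 ?exprn_ge0 ?ler0z.
rewrite (@horner_coef_wide _ (size f)); last exact: size_poly.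
have [k_lt|k_ge] := ltnP k (size f); last by rewrite nth_default // mul0r sumr_ge0.
by rewrite (bigD1 (Ordinal k_lt)) //= coef_map lerDl sumr_ge0.
Qed.

Section CoefBounds.

Context {R : realFieldType} {f : {poly int}} {T n : nat}.
Hypothesis f_ge0 : nonneg_coef f.

Lemma coef_eq0_of_small_root {d : R} {k : nat} :
  0 < d -> d * T%:R <= T%:R - 1 -> (map_poly intr f).[d] = T%:R * d ^+ n ->
  (k + T * T <= n)%N -> f`_k = 0.
Proof.
move=> d_gt0 dT_le fd k_le.
have T_gt1 : 1 < T%:R :> R by have := ler0n R T; nra.
have /subnKC n_eq : (k <= n)%N by lia.
have dk_gt0 : 0 < d ^+ k by exact: exprn_gt0.
have dj_ge0 : 0 <= d ^+ (n - k) by rewrite exprn_ge0 ?ltW.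
have decay : d ^+ (n - k) * (T%:R - 1 + (n - k)%:R) <= T%:R - 1.
  by apply: expr_bernoulli_le; lra.
have T2_le : T%:R * T%:R <= (n - k)%:R :> R by rewrite -natrM ler_nat; lia.
(* T d^j (T - 1 + j) <= T (T - 1) < T - 1 + T^2 <= T - 1 + j *)
have Tdj_lt1 : T%:R * d ^+ (n - k) < 1 by nra.
have : (f`_k)%:~R * d ^+ k < 1 * d ^+ k.
  apply: le_lt_trans (coef_mul_expr_le_horner k f_ge0 (ltW d_gt0)) _.
  by rewrite fd -{1}n_eq exprD mulrA mulrAC ltr_pM2r.
rewrite ltr_pM2r // -(rmorph1 (intr : int -> R)) ltr_int.
by have := f_ge0 k; lia.
Qed.

Lemma coef_eq0_of_large_root {g : R} {k : nat} :
  2 <= g -> (map_poly intr f).[g] = T%:R * g ^+ n -> (n + T <= k)%N -> f`_k = 0.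
Proof.
move=> g_ge2 fg k_ge.
have /subnKC k_eq : (n <= k)%N by lia.
have gn_gt0 : 0 < g ^+ n by apply: exprn_gt0; lra.
have growth : T%:R < g ^+ (k - n).
  by apply: lt_le_trans (natr_succ_le_expr (k - n) g_ge2); rewrite ltr_nat; lia.
suff : ~ (1 <= f`_k) by have := f_ge0 k; lia.
rewrite -(ler_int R) rmorph1 => fk_ge1.
have : g ^+ k <= T%:R * g ^+ n.
  rewrite -fg; apply: le_trans _ (coef_mul_expr_le_horner k f_ge0 _); last lra.
  by rewrite ler_peMl // exprn_ge0 //; lra.
by rewrite -k_eq exprD mulrC ler_pM2r // leNgt growth.
Qed.

Lemma coef_le_of_large_root {g : R} {k : nat} :
  1 <= g <= T%:R -> (map_poly intr f).[g] = T%:R * g ^+ n -> (n < k + T * T)%N ->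
  f`_k <= (T ^ (T * T).+1)%N.
Proof.
move=> /andP[g_ge1 g_leT] fg k_gt.
have gk_gt0 : 0 < g ^+ k by apply: exprn_gt0; lra.
rewrite -(ler_int R); change ((f`_k)%:~R <= (T ^ (T * T).+1)%:R :> R).
rewrite natrX exprS.
have : (f`_k)%:~R * g ^+ k <= T%:R * g ^+ (T * T) * g ^+ k.
  apply: le_trans (coef_mul_expr_le_horner k f_ge0 _) _; first lra.
  by rewrite fg -mulrA -exprD ler_wpM2l // ler_weXn2l //; lia.
rewrite ler_pM2r // => /le_trans; apply; rewrite ler_wpM2l // lerXn2r // nnegrE; lra.
Qed.

End CoefBounds.

Lemma poly_box_enum (P : pred {poly int}) (s W B : nat) :
  (forall f, P f -> forall k,
     [/\ (k < s)%N -> f`_k = 0, (s + W < k)%N -> f`_k = 0 & 0 <= f`_k <= B%:Z]) ->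
  exists l : seq {poly int},
    [/\ uniq l, (size l <= B.+1 ^ W.+1)%N & forall f, (f \in l) = P f].
Proof.
move=> in_box.
pose poly_of (v : {ffun 'I_W.+1 -> 'I_B.+1}) : {poly int} :=
  \poly_(i < s + W.+1) (if (s <= i)%N then (v (inord (i - s)) : nat)%:Z else 0).
exists [seq f <- undup (map poly_of (enum {ffun 'I_W.+1 -> 'I_B.+1})) | P f]; split.
- by rewrite filter_uniq ?undup_uniq.
- rewrite size_filter (leq_trans (count_size _ _)) // (leq_trans (size_undup _)) //.
  by rewrite size_map -cardE card_ffun !card_ord.
move=> f; rewrite mem_filter mem_undup andbC.
apply/andP/idP => [[] //|Pf]; split => //; apply/mapP.
exists [ffun j : 'I_W.+1 => inord `|f`_(s + j)| : 'I_B.+1]; first by rewrite mem_enum.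
apply/polyP => i; rewrite coef_poly.
have [f_lo f_hi /andP[fi_ge0 fi_le]] := in_box f Pf i.
case: ltnP => [i_lt|i_ge]; last by rewrite f_hi //; lia.
case: leqP => [s_le|s_gt]; last by rewrite f_lo.
by rewrite ffunE !inordK ?subnKC //; lia.
Qed.

Definition pbeta_solb {R : realFieldType} (beta alpha : R) (f : {poly int}) : bool :=
  all (fun a => 0 <= a) f && ((map_poly intr f).[beta] == alpha).

Lemma pbeta_solsP (R : realFieldType) (beta alpha : R) (f : {poly int}) :
  reflect (pbeta_sols beta alpha f) (pbeta_solb beta alpha f).
Proof.
apply: (iffP andP) => [[/(all_nthP 0) f_ge0 /eqP f_beta]|[f_ge0 f_beta]].
  split=> // i; have [/f_ge0 //|i_ge] := ltnP i (size f).
  by rewrite nth_default.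
by split; [apply/(all_nthP 0) => i _; apply: f_ge0 | apply/eqP].
Qed.

Lemma pbeta_le_of_box (R : realFieldType) (beta alpha : R) (s W B : nat) :
  (forall f, pbeta_sols beta alpha f -> forall k,
     [/\ (k < s)%N -> f`_k = 0, (s + W < k)%N -> f`_k = 0 & f`_k <= B%:Z]) ->
  pbeta_le beta alpha (B.+1 ^ W.+1).
Proof.
move=> in_box.
have [|l [l_uniq l_size l_mem]] := @poly_box_enum (pbeta_solb beta alpha) s W B.
  move=> f /pbeta_solsP f_sol k; have [f_lo f_hi f_le] := in_box f f_sol k.
  by split=> //; rewrite f_le andbT; case: f_sol.
by exists l; split=> // f; rewrite l_mem; split=> /pbeta_solsP.
Qed.


Theorem proposition11 (R : realFieldType) (beta : R) (t m : int) :
  quad_int_with beta t m ->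
  totally_pos_with beta t ->
  m < t ->
  exists c : nat, (0 < c)%N /\
    forall n : nat, pbeta_le beta (t%:~R * beta ^+ n) c.
Proof.
move=> beta_quad [beta_gt0 conj_gt0] m_lt_t.
have m_le : m%:~R + 2 <= t%:~R :> R.
  have := irreducible_quad_poly_le_sub2 beta_quad.1 m_lt_t.
  by rewrite -(ler_int R) rmorphB /= lerBrDr.
have [g [d [g_ge2 g_le d_gt0 d_le conj_values]]] :=
  quad_int_conj_split beta_quad beta_gt0 conj_gt0 m_le.
have t_gt0 : 0 < t by rewrite -(ltr_int R); lra.
pose T := `|t|%N; have tT : t%:~R = T%:R :> R by rewrite -[t]gez0_abs ?ltW.
rewrite tT in g_le d_le.
(* Every solution is supported on [n - T^2, n + T], with coefficients at most T^(T^2+1). *)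
exists ((T ^ (T * T).+1).+1 ^ (T * T + T).+1)%N; split=> [|n]; first by rewrite expn_gt0.
apply: (@pbeta_le_of_box _ _ _ (n - T * T)) => f [f_ge0 f_beta] k.
have [f_g f_d] := conj_values f t n f_beta; rewrite tT in f_g f_d.
split=> [k_lt|k_gt|].
- by apply: (coef_eq0_of_small_root f_ge0 d_gt0 d_le f_d); lia.
- by apply: (coef_eq0_of_large_root f_ge0 g_ge2 f_g); lia.
have [k_le|k_gt] := leqP (k + T * T) n.
  by rewrite (coef_eq0_of_small_root f_ge0 d_gt0 d_le f_d k_le).
by apply: (coef_le_of_large_root f_ge0 _ f_g k_gt); rewrite g_le andbT; lra.
Qed.
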